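(* Let $X,Y,F,\hat A,y,u^\dagger,\rho,\nu,L_F,L_{\hat A},u_0$ satisfy the hypotheses of the noise-free convergence theorem stated in the context, and let $\bar u$ be the limit of the noise-free iteration $(u_k)$ (so $F(\bar u)=y$). Let $\delta_n\to0$, $y_n\in Y$ with $\|y_n-y\|\le\delta_n$, and let $(u^{\delta_n}_k)_k$ be generated from $u^{\delta_n}_0=u_0$ by $$u^{\delta_n}_{k+1}=u^{\delta_n}_k-F'(u^{\delta_n}_k)^*(F(u^{\delta_n}_k)-y_n)-\lambda^{\delta_n}_k\hat A'(u^{\delta_n}_k)^*(\hat A(u^{\delta_n}_k)-y_n),$$ where the step parameters are given by $\lambda^{\delta_n}_k=\varphi_k(u^{\delta_n}_k,y_n)$ and $\lambda_k=\varphi_k(u_k,y)$ for functions $\varphi_k:X\times Y\to[0,\infty)$ continuous at the relevant points. Let $\tau>0$ with $C_\tau:=1-L_F^2-\nu-\frac{1+\nu}{\tau}\ge0$, and assume that for all $n$ and all $k<k_n$ the conditions $\lambda^{\delta_n}_kL_{\hat A}C^{\delta_n}_{\hat A}\le\rho$, $\lambda^{\delta_n}_k\le C_\lambda\|F(u^{\delta_n}_k)-y_n\|^2$ hold, with $C^{\delta_n}_{\hat A}:=L_{\hat A}\rho+\|\hat A(u^\dagger)\|+\|y_n\|$ and a constant $C_\lambda>0$ with $C_\tau-2L_{\hat A}C^{\delta_n}_{\hat A}C_\lambda\rho>0$ for all $n$. Let $k_n=k_*(\delta_n,y_n)$ be the stopping index of the discrepancy principle, i.e. the first index with $\|F(u^{\delta_n}_{k_n})-y_n\|\le\tau\delta_n$.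 Then $u^{\delta_n}_{k_n}\to\bar u$ as $n\to\infty$; i.e. the discrepancy-stopped iteration converges to a solution of $F(u)=y$ as $\delta\to0$.
   Context: $\mathcal{B}_\rho(v)$ denotes the closed ball of radius $\rho$ centred at $v$; $X,Y$ real Hilbert spaces; $^*$ the Hilbert adjoint. Noise-free convergence theorem hypotheses: $F(u^\dagger)=y$; there is $\rho>0$ with $\mathcal{B}_\rho(u^\dagger)\subseteq\mathcal{B}_{2\rho}(u_0)$, $\mathcal B_\rho(u^\dagger)\subseteq\mathcal D(F)\cap\mathcal D(\hat A)$, $u_0\in\mathcal B_\rho(u^\dagger)$; $\|F(u)-F(\tilde u)-F'(u)(u-\tilde u)\|\le\nu\|F(u)-F(\tilde u)\|$ for all $u,\tilde u\in\mathcal B_\rho(u^\dagger)$ with $\nu>0$; $F,\hat A$ continuously Fréchet differentiable on $\mathcal B_\rho(u^\dagger)$ with $\|F'(u)\|\le L_F$, $\|\hat A'(u)\|\le L_{\hat A}$ there; $\|\hat A(u^\dagger)-y\|\ge C_N>0$; the noise-free iteration $u_{k+1}=u_k-F'(u_k)^*(F(u_k)-y)-\lambda_k\hat A'(u_k)^*(\hat A(u_k)-y)$ has $\lambda_kL_{\hat A}C^0_{\hat A}\le\rho$, $\lambda_k\le C^0_\lambda\|F(u_k)-y\|^2$ for all $k$, where $C^0_{\hat A}=L_{\hat A}\rho+\|\hat A(u^\dagger)\|+\|y\|$ and $1-\nu-L_F^2-2L_{\hat A}C^0_{\hat A}C^0_\lambda\rho>0$. Under these hypotheses the noise-free iterates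 converge to some $\bar u$ with $F(\bar u)=y$. *)

From Stdlib Require Import Reals.
Open Scope R_scope.

Record Hilbert := MkHilbert {
  hcarrier :> Type;
  hzero : hcarrier;
  hadd : hcarrier -> hcarrier -> hcarrier;
  hopp : hcarrier -> hcarrier;
  hscal : R -> hcarrier -> hcarrier;
  hinner : hcarrier -> hcarrier -> R;
  hadd_assoc : forall x y z, hadd x (hadd y z) = hadd (hadd x y) z;
  hadd_comm : forall x y, hadd x y = hadd y x;
  hadd_zero : forall x, hadd hzero x = x;
  hadd_opp : forall x, hadd x (hopp x) = hzero;
  hscal_one : forall x, hscal 1 x = x;
  hscal_assoc : forall a b x, hscal a (hscal b x) = hscal (a * b) x;
  hscal_distr_l : forall a x y, hscal a (hadd x y) = hadd (hscal a x) (hscal a y);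
  hscal_distr_r : forall a b x, hscal (a + b) x = hadd (hscal a x) (hscal b x);
  hinner_sym : forall x y, hinner x y = hinner y x;
  hinner_add_l : forall x y z, hinner (hadd x y) z = hinner x z + hinner y z;
  hinner_scal_l : forall a x y, hinner (hscal a x) y = a * hinner x y;
  hinner_pos : forall x, 0 <= hinner x x;
  hinner_def : forall x, hinner x x = 0 -> x = hzero;
  hcomplete : forall s : nat -> hcarrier,
    (forall eps, 0 < eps -> exists N, forall m n, (N <= m)%nat -> (N <= n)%nat ->
        sqrt (hinner (hadd (s m) (hopp (s n))) (hadd (s m) (hopp (s n)))) < eps) ->
    exists l, forall eps, 0 < eps -> exists N, forall n, (N <= n)%nat ->
        sqrt (hinner (hadd (s n) (hopp l)) (hadd (s n) (hopp l))) < eps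
}.

Arguments hzero {h}.
Arguments hadd {h}.
Arguments hopp {h}.
Arguments hscal {h}.
Arguments hinner {h}.

Definition hsub {H : Hilbert} (x y : H) : H := hadd x (hopp y).
Definition hnorm {H : Hilbert} (x : H) : R := sqrt (hinner x x).

Declare Scope hilbert_scope.
Infix "+v" := hadd (at level 50, left associativity) : hilbert_scope.
Infix "-v" := hsub (at level 50, left associativity) : hilbert_scope.
Infix "*v" := hscal (at level 40, left associativity) : hilbert_scope.
Open Scope hilbert_scope.

Definition in_ball {H : Hilbert} (v : H) (rho : R) (u : H) : Prop :=
  hnorm (u -v v) <= rho.

Definition hconverges {H : Hilbert} (s : nat -> H) (l : H) : Prop :=
  forall eps, 0 < eps -> exists N, forall n, (N <= n)%nat -> hnorm (s n -v l) < eps.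

Definition is_linear {X Y : Hilbert} (T : X -> Y) : Prop :=
  (forall x z, T (x +v z) = T x +v T z) /\ (forall a x, T (a *v x) = a *v T x).

Definition opnorm_le {X Y : Hilbert} (T : X -> Y) (L : R) : Prop :=
  forall h, hnorm (T h) <= L * hnorm (h).

Definition bounded_linear {X Y : Hilbert} (T : X -> Y) : Prop :=
  is_linear T /\ exists C, opnorm_le T C.

Definition frechet_deriv {X Y : Hilbert} (F : X -> Y) (u : X) (T : X -> Y) : Prop :=
  bounded_linear T /\
  forall eps, 0 < eps -> exists d, 0 < d /\
    forall h, hnorm (h) < d -> hnorm (F (u +v h) -v F u -v T h) <= eps * hnorm (h).

Definition is_adjoint {X Y : Hilbert} (T : X -> Y) (Ts : Y -> X) : Prop :=
  forall h k, hinner (T h) k = hinner h (Ts k).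

Definition C1_on_ball {X Y : Hilbert} (F : X -> Y) (DF : X -> X -> Y) (v : X) (rho : R) : Prop :=
  (forall u, in_ball v rho u -> frechet_deriv F u (DF u)) /\
  (forall u, in_ball v rho u -> forall eps, 0 < eps -> exists d, 0 < d /\
     forall w, in_ball v rho w -> hnorm (w -v u) < d ->
       opnorm_le (fun h => DF w h -v DF u h) eps).

(** The iteration
    u_{k+1} = u_k - F'(u_k)^*(F(u_k) - yv) - phi_k(u_k,yv) Â'(u_k)^*(Â(u_k) - yv),
    u_0 = u0; here DFs u = F'(u)^*, DAs u = Â'(u)^*. *)
Fixpoint iterate {X Y : Hilbert} (F : X -> Y) (DFs : X -> Y -> X)
    (A : X -> Y) (DAs : X -> Y -> X) (phi : nat -> X -> Y -> R)
    (yv : Y) (u0 : X) (k : nat) : X :=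
  match k with
  | O => u0
  | S k' =>
      let uk := iterate F DFs A DAs phi yv u0 k' in
      uk -v DFs uk (F uk -v yv) -v (phi k' uk yv) *v DAs uk (A uk -v yv)
  end.

(* Under the tangential cone condition a step of the iteration, exact or noisy,
   does not increase the distance to any solution in the ball, as long as the
   residual still exceeds tau * delta and the step sizes lambda_k are small
   relative to the squared residual.  For fixed k the noisy iterate u_k^delta
   depends continuously on the data, so it tends to u_k as delta -> 0.  Given
   eps, pick K with u_K close to ubar.  If k_n >= K, monotonicity bounds the
   error by |u_K^{delta_n} - ubar|.  If k_n = j < K for infinitely many n, the
   discrepancy principle forces F(u_j) = y; then the exact iteration is
   stationary from j on, so u_j = ubar. *)

From Stdlib Require Import Reals Lra Psatz Lia Classical.
Open Scope R_scope.
Open Scope hilbert_scope.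

Lemma hinner_zero_l {H : Hilbert} (h : H) : hinner hzero h = 0.
Proof. pose proof (hinner_add_l H hzero hzero h) as E. rewrite hadd_zero in E. lra. Qed.

Lemma hinner_opp_l {H : Hilbert} (x h : H) : hinner (hopp x) h = - hinner x h.
Proof.
  pose proof (hinner_add_l H x (hopp x) h) as E.
  rewrite hadd_opp, hinner_zero_l in E. lra.
Qed.

Lemma hinner_sub_l {H : Hilbert} (x z h : H) : hinner (x -v z) h = hinner x h - hinner z h.
Proof. unfold hsub. rewrite hinner_add_l, hinner_opp_l. ring. Qed.

Lemma hinner_zero_r {H : Hilbert} (h : H) : hinner h hzero = 0.
Proof. rewrite hinner_sym. apply hinner_zero_l. Qed.

Lemma hinner_add_r {H : Hilbert} (x y z : H) : hinner x (y +v z) = hinner x y + hinner x z.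
Proof. rewrite !(hinner_sym H x). apply hinner_add_l. Qed.

Lemma hinner_scal_r {H : Hilbert} a (x y : H) : hinner x (a *v y) = a * hinner x y.
Proof. rewrite !(hinner_sym H x). apply hinner_scal_l. Qed.

Lemma hinner_opp_r {H : Hilbert} (x y : H) : hinner x (hopp y) = - hinner x y.
Proof. rewrite !(hinner_sym H x). apply hinner_opp_l. Qed.

Lemma hinner_sub_r {H : Hilbert} (x y z : H) : hinner x (y -v z) = hinner x y - hinner x z.
Proof. rewrite !(hinner_sym H x). apply hinner_sub_l. Qed.

Lemma hinner_ext {H : Hilbert} (x z : H) : (forall h, hinner x h = hinner z h) -> x = z.
Proof.
  intros E.
  assert (Ez : x -v z = hzero).
  { apply hinner_def. rewrite hinner_sub_l, (E (x -v z)). ring. }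
  transitivity ((x -v z) +v z).
  - unfold hsub.
    rewrite <- hadd_assoc, (hadd_comm H (hopp z)), hadd_opp, hadd_comm, hadd_zero.
    reflexivity.
  - rewrite Ez, hadd_zero. reflexivity.
Qed.

(* Identities between vector expressions are checked by pairing both sides
   with an arbitrary vector and normalising the resulting real expressions. *)
Ltac hexpand :=
  repeat rewrite ?hinner_add_l, ?hinner_sub_l, ?hinner_opp_l, ?hinner_scal_l, ?hinner_zero_l.
Ltac hilbert_ring := apply hinner_ext; intro; hexpand; ring.

Lemma hsub_diag {H : Hilbert} (x : H) : x -v x = hzero.
Proof. hilbert_ring. Qed.

Lemma hsub_eq0 {H : Hilbert} (x z : H) : x -v z = hzero -> x = z.
Proof.
  intros E. apply hinner_ext. intro h.
  pose proof (hinner_sub_l x z h) as E'. rewrite E, hinner_zero_l in E'. lra.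
Qed.

Lemma hnorm_ge_0 {H : Hilbert} (x : H) : 0 <= hnorm x.
Proof. apply sqrt_pos. Qed.

Lemma hnorm_sq {H : Hilbert} (x : H) : hnorm x * hnorm x = hinner x x.
Proof. apply sqrt_sqrt, hinner_pos. Qed.

Lemma hnorm_pow2 {H : Hilbert} (x : H) : hnorm x ^ 2 = hinner x x.
Proof. rewrite <- hnorm_sq. ring. Qed.

Lemma hnorm_zero {H : Hilbert} : hnorm (@hzero H) = 0.
Proof. unfold hnorm. rewrite hinner_zero_l. apply sqrt_0. Qed.

Lemma hnorm_eq0 {H : Hilbert} (x : H) : hnorm x = 0 -> x = hzero.
Proof. intro E. apply hinner_def. rewrite <- hnorm_sq, E. ring. Qed.

Lemma hnorm_sub_eq0 {H : Hilbert} (x z : H) : hnorm (x -v z) = 0 -> x = z.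
Proof. intro E. apply hsub_eq0, hnorm_eq0, E. Qed.

Lemma Cauchy_Schwarz {H : Hilbert} (x y : H) : Rabs (hinner x y) <= hnorm x * hnorm y.
Proof.
  assert (Hsq : hinner x y ^ 2 <= hinner x x * hinner y y).
  { destruct (Req_dec (hinner y y) 0) as [E|E].
    - apply hinner_def in E. rewrite E, hinner_zero_r, hinner_zero_l. lra.
    - pose proof (hinner_pos H y).
      set (t := - hinner x y / hinner y y).
      (* the quadratic t |-> |x + t y|^2 is nonnegative at its minimiser *)
      assert (Hq : 0 <= hinner x x - hinner x y ^ 2 / hinner y y).
      { replace (hinner x x - hinner x y ^ 2 / hinner y y)
          with (hinner (x +v t *v y) (x +v t *v y)).
        - apply hinner_pos.
        - hexpand. rewrite !hinner_add_r, !hinner_scal_r, (hinner_sym H y x).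
          unfold t. field. exact E. }
      assert (Hyy : 0 < hinner y y) by lra.
      apply (Rmult_le_compat_r (hinner y y)) in Hq; [|lra].
      replace ((hinner x x - hinner x y ^ 2 / hinner y y) * hinner y y)
        with (hinner x x * hinner y y - hinner x y ^ 2) in Hq by (field; lra).
      lra. }
  pose proof (hnorm_ge_0 x). pose proof (hnorm_ge_0 y).
  rewrite <- !hnorm_sq in Hsq.
  apply Rsqr_incr_0_var; [|nra]. unfold Rsqr.
  rewrite <- Rabs_mult, Rabs_pos_eq by nra. nra.
Qed.

Lemma Cauchy_Schwarz_le {H : Hilbert} (x y : H) : hinner x y <= hnorm x * hnorm y.
Proof. pose proof (Cauchy_Schwarz x y). pose proof (Rle_abs (hinner x y)). lra. Qed.

Lemma Cauchy_Schwarz_ge {H : Hilbert} (x y : H) : - (hnorm x * hnorm y) <= hinner x y.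
Proof.
  pose proof (Cauchy_Schwarz x y). pose proof (Rle_abs (- hinner x y)).
  rewrite Rabs_Ropp in *. lra.
Qed.

Lemma hnorm_triang {H : Hilbert} (x y : H) : hnorm (x +v y) <= hnorm x + hnorm y.
Proof.
  pose proof (hnorm_ge_0 x). pose proof (hnorm_ge_0 y). pose proof (Cauchy_Schwarz_le x y).
  apply Rsqr_incr_0_var; [|lra]. unfold Rsqr.
  rewrite hnorm_sq. hexpand. rewrite !hinner_add_r, (hinner_sym H y x), <- !hnorm_sq. nra.
Qed.

Lemma hnorm_opp {H : Hilbert} (x : H) : hnorm (hopp x) = hnorm x.
Proof. unfold hnorm. rewrite hinner_opp_l, hinner_opp_r. f_equal. ring. Qed.

Lemma hnorm_triang_sub {H : Hilbert} (x y : H) : hnorm (x -v y) <= hnorm x + hnorm y.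
Proof. unfold hsub. rewrite <- (hnorm_opp y). apply hnorm_triang. Qed.

Lemma hnorm_sub_sym {H : Hilbert} (x y : H) : hnorm (x -v y) = hnorm (y -v x).
Proof. replace (x -v y) with (hopp (y -v x)) by hilbert_ring. apply hnorm_opp. Qed.

Lemma hnorm_dist_triang {H : Hilbert} (x y z : H) :
  hnorm (x -v z) <= hnorm (x -v y) + hnorm (y -v z).
Proof. replace (x -v z) with ((x -v y) +v (y -v z)) by hilbert_ring. apply hnorm_triang. Qed.

Lemma hnorm_scal {H : Hilbert} a (x : H) : hnorm (a *v x) = Rabs a * hnorm x.
Proof.
  unfold hnorm. rewrite hinner_scal_l, hinner_scal_r, <- Rmult_assoc, sqrt_mult_alt by nra.
  f_equal. apply sqrt_Rsqr_abs.
Qed.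

Lemma hnorm_le_of_inner_le {H : Hilbert} (v : H) K :
  0 <= K -> (forall h, hinner h v <= K * hnorm h) -> hnorm v <= K.
Proof.
  intros HK Hb. specialize (Hb v). rewrite <- hnorm_sq in Hb.
  pose proof (hnorm_ge_0 v). nra.
Qed.

Lemma in_ball_center {H : Hilbert} (c : H) rho : 0 <= rho -> in_ball c rho c.
Proof. intro. unfold in_ball. rewrite hsub_diag, hnorm_zero. assumption. Qed.

Lemma adjoint_opnorm_le {X Y : Hilbert} (T : X -> Y) Ts L :
  0 <= L -> is_adjoint T Ts -> opnorm_le T L -> opnorm_le Ts L.
Proof.
  intros HL Hadj HT k. apply hnorm_le_of_inner_le.
  - apply Rmult_le_pos; [exact HL | apply hnorm_ge_0].
  - intro h. rewrite <- Hadj.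
    pose proof (Cauchy_Schwarz_le (T h) k). pose proof (HT h). pose proof (hnorm_ge_0 k).
    nra.
Qed.

Lemma adjoint_zero {X Y : Hilbert} (T : X -> Y) Ts : is_adjoint T Ts -> Ts hzero = hzero.
Proof.
  intros Hadj. apply hnorm_eq0, Rle_antisym; [|apply hnorm_ge_0].
  apply hnorm_le_of_inner_le; [lra|]. intro h.
  rewrite <- Hadj, hinner_zero_r. pose proof (hnorm_ge_0 h). lra.
Qed.

(* A negative bound forces [X] to be the zero space. *)
Lemma hconverges_of_opnorm_neg {X Y : Hilbert} (T : X -> Y) L (s : nat -> X) l :
  L < 0 -> opnorm_le T L -> hconverges s l.
Proof.
  intros HL HT eps Heps. exists 0%nat. intros n _.
  pose proof (HT (s n -v l)). pose proof (hnorm_ge_0 (T (s n -v l))).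
  pose proof (hnorm_ge_0 (s n -v l)). nra.
Qed.

Lemma derivable_pt_lim_inner_segment {X Y : Hilbert} (G T : X -> Y) (c w : X) (q : Y) t :
  frechet_deriv G (c +v t *v w) T ->
  derivable_pt_lim (fun s => hinner (G (c +v s *v w)) q) t (hinner (T w) q).
Proof.
  intros [[[_ T_scal] _] HG] eps Heps.
  pose proof (hnorm_ge_0 w) as Nw. pose proof (hnorm_ge_0 q) as Nq.
  set (e := eps / (hnorm w * hnorm q + 1)).
  assert (He : 0 < e) by (unfold e; apply Rdiv_lt_0_compat; nra).
  destruct (HG e He) as [d [Hd HGd]].
  assert (Hdw : 0 < d / (hnorm w + 1)) by (apply Rdiv_lt_0_compat; lra).
  exists (mkposreal _ Hdw). intros h Hh0 Hh. simpl in Hh. cbv beta.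
  set (p := c +v t *v w).
  replace (c +v (t + h) *v w) with (p +v h *v w) by (unfold p; hilbert_ring).
  assert (Hhw : hnorm (h *v w) < d).
  { rewrite hnorm_scal.
    apply (Rmult_lt_compat_r (hnorm w + 1)) in Hh; [|lra].
    unfold Rdiv in Hh. rewrite Rmult_assoc, Rinv_l in Hh by lra.
    pose proof (Rabs_pos h). nra. }
  specialize (HGd _ Hhw). rewrite T_scal, hnorm_scal in HGd.
  replace ((hinner (G (p +v h *v w)) q - hinner (G p) q) / h - hinner (T w) q)
    with (hinner (G (p +v h *v w) -v G p -v h *v T w) q / h) by (hexpand; field; exact Hh0).
  unfold Rdiv. rewrite Rabs_mult, Rabs_inv.
  pose proof (Cauchy_Schwarz (G (p +v h *v w) -v G p -v h *v T w) q).
  assert (0 < Rabs h) by (apply Rabs_pos_lt; exact Hh0).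
  apply (Rmult_lt_reg_r (Rabs h)); [assumption|].
  rewrite Rmult_assoc, Rinv_l, Rmult_1_r by lra.
  apply Rle_lt_trans with (e * (Rabs h * hnorm w) * hnorm q).
  { eapply Rle_trans; [eassumption|]. apply Rmult_le_compat_r; assumption. }
  assert (e * (hnorm w * hnorm q + 1) = eps) by (unfold e; field; nra).
  nra.
Qed.

Lemma mean_value_bound {X Y : Hilbert} (G : X -> Y) (DG : X -> X -> Y) (c : X) rho L u :
  0 <= L ->
  (forall v, in_ball c rho v -> frechet_deriv G v (DG v)) ->
  (forall v, in_ball c rho v -> opnorm_le (DG v) L) ->
  in_ball c rho u -> hnorm (G u -v G c) <= L * hnorm (u -v c).
Proof.
  intros HL HG HDG Hu.
  set (w := u -v c). set (q := G u -v G c).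
  pose proof (hnorm_ge_0 w). pose proof (hnorm_ge_0 q).
  assert (Hseg : forall t, 0 <= t <= 1 -> in_ball c rho (c +v t *v w)).
  { intros t Ht. unfold in_ball in *.
    replace ((c +v t *v w) -v c) with (t *v w) by hilbert_ring.
    rewrite hnorm_scal, Rabs_pos_eq by lra. fold w in Hu. nra. }
  destruct (MVT_cor2 (fun t => hinner (G (c +v t *v w)) q)
              (fun t => hinner (DG (c +v t *v w) w) q) 0 1 Rlt_0_1) as [t0 [Ht0 Hmid]].
  { intros t Ht. apply derivable_pt_lim_inner_segment, HG, Hseg, Ht. }
  replace (c +v 1 *v w) with u in Ht0 by (unfold w; hilbert_ring).
  replace (c +v 0 *v w) with c in Ht0 by hilbert_ring.
  replace (hinner (G u) q - hinner (G c) q) with (hnorm q * hnorm q) in Ht0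
    by (rewrite hnorm_sq; unfold q; hexpand; ring).
  assert (hinner (DG (c +v t0 *v w) w) q <= L * hnorm w * hnorm q).
  { eapply Rle_trans; [apply Cauchy_Schwarz_le|].
    apply Rmult_le_compat_r; [assumption|]. apply HDG, Hseg. lra. }
  destruct (Req_dec (hnorm q) 0) as [Hq0|Hq0].
  - rewrite Hq0. nra.
  - apply (Rmult_le_reg_r (hnorm q)); lra.
Qed.

(* The cone condition turns [<T e, r>], [r = Fu - yv], into [|r|^2] up to
   errors of order [nu] and [delta]. *)
Lemma tangential_cone_descent {X Y : Hilbert} (T : X -> Y) Ts (e : X) (Fu Fw yv : Y)
    nu LF delta :
  0 <= LF -> 0 <= nu -> is_adjoint T Ts -> opnorm_le T LF ->
  hnorm (Fu -v Fw -v T e) <= nu * hnorm (Fu -v Fw) -> hnorm (yv -v Fw) <= delta ->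
  (2 * (1 - nu) - LF ^ 2) * hnorm (Fu -v yv) ^ 2 - 2 * (1 + nu) * delta * hnorm (Fu -v yv)
    <= 2 * hinner e (Ts (Fu -v yv)) - hnorm (Ts (Fu -v yv)) ^ 2.
Proof.
  intros HLF Hnu Hadj HT Hcone Hdelta.
  set (r := Fu -v yv). set (W := Fu -v Fw -v T e) in Hcone |- *.
  rewrite <- Hadj.
  replace (T e) with (r +v (yv -v Fw) -v W) by (unfold r, W; hilbert_ring).
  rewrite hinner_sub_l, hinner_add_l.
  assert (HFw : hnorm (Fu -v Fw) <= hnorm r + delta).
  { replace (Fu -v Fw) with (r +v (yv -v Fw)) by (unfold r; hilbert_ring).
    pose proof (hnorm_triang r (yv -v Fw)). lra. }
  pose proof (Cauchy_Schwarz_ge (yv -v Fw) r). pose proof (Cauchy_Schwarz_le W r).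
  pose proof (adjoint_opnorm_le _ _ _ HLF Hadj HT r).
  pose proof (hnorm_ge_0 r). pose proof (hnorm_ge_0 W). pose proof (hnorm_ge_0 (yv -v Fw)).
  pose proof (hnorm_ge_0 (Ts r)).
  rewrite <- (hnorm_sq r).
  assert (hnorm (Ts r) ^ 2 <= LF ^ 2 * hnorm r ^ 2) by nra.
  assert (hnorm (yv -v Fw) * hnorm r <= delta * hnorm r) by nra.
  assert (hnorm W * hnorm r <= nu * (hnorm r + delta) * hnorm r).
  { apply Rmult_le_compat_r; [assumption | nra]. }
  assert (hnorm r ^ 2 = hnorm r * hnorm r) by ring.
  lra.
Qed.

(* [3 lam M rho] bounds the cross term [2 lam |e - g| |a|] plus [lam^2 |a|^2],
   since [|e - g| <= |e| <= rho] and [lam M <= rho]. *)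
Lemma perturbed_descent_nonexpansive {X : Hilbert} (e g a : X) lam M rho :
  hnorm e <= rho -> 0 <= lam -> hnorm a <= M -> lam * M <= rho ->
  3 * (lam * M * rho) <= 2 * hinner e g - hnorm g ^ 2 ->
  hnorm (e -v g -v lam *v a) <= hnorm e.
Proof.
  intros He Hlam Ha HlamM Hgain.
  set (d := e -v g).
  pose proof (hnorm_ge_0 e). pose proof (hnorm_ge_0 a). pose proof (hnorm_ge_0 d).
  assert (Hd : hnorm d ^ 2 = hnorm e ^ 2 - (2 * hinner e g - hnorm g ^ 2)).
  { rewrite !hnorm_pow2. unfold d. hexpand. rewrite !hinner_sub_r, (hinner_sym _ g e). ring. }
  assert (0 <= lam * M * rho) by (apply Rmult_le_pos; nra).
  assert (Hde : hnorm d <= hnorm e) by nra.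
  pose proof (Cauchy_Schwarz_ge d a).
  assert (lam * hnorm d * hnorm a <= lam * rho * M).
  { rewrite !Rmult_assoc. apply Rmult_le_compat_l; [assumption|].
    apply Rmult_le_compat; lra. }
  assert ((lam * hnorm a) * (lam * hnorm a) <= rho * (lam * M)).
  { assert (lam * hnorm a <= lam * M) by (apply Rmult_le_compat_l; assumption).
    pose proof (Rmult_le_pos _ _ Hlam (hnorm_ge_0 a)). nra. }
  apply Rsqr_incr_0_var; [|assumption]. unfold Rsqr.
  rewrite !hnorm_sq. hexpand. rewrite !hinner_sub_r, !hinner_scal_r, (hinner_sym _ a d).
  rewrite <- !hnorm_sq. nra.
Qed.

(* [c] absorbs the noise term: [c = 0] for exact data, [c = (1 + nu) / tau]
   before the discrepancy principle stops. *)
Lemma step_size_admissible lam M Cl rho R delta nu LF c :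
  0 <= lam -> lam <= Cl * R ^ 2 -> 0 <= M -> 0 <= rho ->
  (1 + nu) * delta * R <= c * R ^ 2 ->
  1 - LF ^ 2 - nu - c - 2 * M * Cl * rho > 0 ->
  3 * (lam * M * rho) <= (2 * (1 - nu) - LF ^ 2) * R ^ 2 - 2 * (1 + nu) * delta * R.
Proof.
  intros Hlam HlamR HM Hrho Hnoise HC.
  pose proof (pow2_ge_0 R). pose proof (pow2_ge_0 LF).
  assert (HMr : 0 <= M * rho) by (apply Rmult_le_pos; assumption).
  assert (lam * (M * rho) <= Cl * R ^ 2 * (M * rho)) by (apply Rmult_le_compat_r; assumption).
  assert (0 <= lam * (M * rho)) by (apply Rmult_le_pos; assumption).
  assert (0 <= (1 - LF ^ 2 - nu - c - 2 * M * Cl * rho) * R ^ 2) by nra.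
  nra.
Qed.

Lemma noise_absorbed_by_discrepancy nu tau delta R :
  0 <= nu -> 0 < tau -> 0 <= R -> tau * delta < R ->
  (1 + nu) * delta * R <= (1 + nu) / tau * R ^ 2.
Proof.
  intros Hnu Htau HR Hdisc.
  assert (delta * R <= R ^ 2 / tau).
  { apply (Rmult_le_reg_r tau); [assumption|].
    replace (R ^ 2 / tau * tau) with (R ^ 2) by (field; lra). nra. }
  unfold Rdiv in *. nra.
Qed.

Definition hconverges_on {H : Hilbert} (P : nat -> Prop) (s : nat -> H) (l : H) : Prop :=
  forall eps, 0 < eps -> exists N, forall n, (N <= n)%nat -> P n -> hnorm (s n -v l) < eps.

Definition Rconverges_on (P : nat -> Prop) (s : nat -> R) (l : R) : Prop :=
  forall eps, 0 < eps -> exists N, forall n, (N <= n)%nat -> P n -> Rabs (s n - l) < eps.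

Lemma hconverges_on_weaken {H : Hilbert} (P Q : nat -> Prop) (s : nat -> H) l :
  hconverges_on P s l -> (forall n, Q n -> P n) -> hconverges_on Q s l.
Proof.
  intros Hs HQP eps Heps. destruct (Hs eps Heps) as [N HN]. exists N. auto.
Qed.

Lemma hconverges_on_of_hconverges {H : Hilbert} P (s : nat -> H) l :
  hconverges s l -> hconverges_on P s l.
Proof. intros Hs eps Heps. destruct (Hs eps Heps) as [N HN]. exists N. auto. Qed.

Lemma hconverges_of_dist_le {H : Hilbert} (s : nat -> H) l (delta : nat -> R) :
  (forall n, hnorm (s n -v l) <= delta n) ->
  (forall eps, 0 < eps -> exists N, forall n, (N <= n)%nat -> Rabs (delta n) < eps) ->
  hconverges s l.
Proof.
  intros Hs Hdelta eps Heps. destruct (Hdelta eps Heps) as [N HN]. exists N. intros n Hn.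
  pose proof (Hs n). pose proof (HN n Hn). pose proof (Rle_abs (delta n)). lra.
Qed.

Lemma hconverges_on_sub {H : Hilbert} P (s t : nat -> H) l m :
  hconverges_on P s l -> hconverges_on P t m ->
  hconverges_on P (fun n => s n -v t n) (l -v m).
Proof.
  intros Hs Ht eps Heps.
  destruct (Hs (eps / 2)) as [N1 H1]; [lra|]. destruct (Ht (eps / 2)) as [N2 H2]; [lra|].
  exists (max N1 N2). intros n Hn Pn.
  replace (s n -v t n -v (l -v m)) with ((s n -v l) -v (t n -v m)) by hilbert_ring.
  eapply Rle_lt_trans; [apply hnorm_triang_sub|].
  specialize (H1 n ltac:(lia) Pn). specialize (H2 n ltac:(lia) Pn). lra.
Qed.

Lemma hconverges_on_scal {H : Hilbert} P (f : nat -> R) f0 (a : nat -> H) a0 :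
  Rconverges_on P f f0 -> hconverges_on P a a0 ->
  hconverges_on P (fun n => f n *v a n) (f0 *v a0).
Proof.
  intros Hf Ha eps Heps.
  pose proof (hnorm_ge_0 a0). pose proof (Rabs_pos f0).
  destruct (Hf (eps / (2 * (hnorm a0 + 1)))) as [N1 Hf1]; [apply Rdiv_lt_0_compat; lra|].
  destruct (Ha (Rmin 1 (eps / (2 * (Rabs f0 + 1))))) as [N2 Ha2].
  { apply Rmin_pos; [lra|]. apply Rdiv_lt_0_compat; lra. }
  exists (max N1 N2). intros n Hn Pn.
  specialize (Hf1 n ltac:(lia) Pn). specialize (Ha2 n ltac:(lia) Pn).
  pose proof (Rmin_l 1 (eps / (2 * (Rabs f0 + 1)))).
  pose proof (Rmin_r 1 (eps / (2 * (Rabs f0 + 1)))).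
  replace (f n *v a n -v f0 *v a0) with ((f n - f0) *v a n +v f0 *v (a n -v a0))
    by hilbert_ring.
  eapply Rle_lt_trans; [apply hnorm_triang|]. rewrite !hnorm_scal.
  assert (hnorm (a n) <= hnorm a0 + 1).
  { replace (a n) with (a0 +v (a n -v a0)) by hilbert_ring.
    pose proof (hnorm_triang a0 (a n -v a0)). lra. }
  pose proof (hnorm_ge_0 (a n)). pose proof (Rabs_pos (f n - f0)).
  pose proof (hnorm_ge_0 (a n -v a0)).
  assert (Rabs (f n - f0) * hnorm (a n) <= eps / 2).
  { assert (eps / (2 * (hnorm a0 + 1)) * (hnorm a0 + 1) = eps / 2) by (field; lra). nra. }
  assert (Rabs f0 * hnorm (a n -v a0) < eps / 2).
  { assert (eps / (2 * (Rabs f0 + 1)) * (Rabs f0 + 1) = eps / 2) by (field; lra). nra. }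
  lra.
Qed.

Lemma frechet_hconverges_on {X Y : Hilbert} P (G : X -> Y) T u (x : nat -> X) :
  frechet_deriv G u T -> hconverges_on P x u -> hconverges_on P (fun n => G (x n)) (G u).
Proof.
  intros [[_ [C HC]] HG] Hx eps Heps.
  set (L := Rmax C 0).
  assert (HL : 0 <= L) by apply Rmax_r.
  assert (HT : opnorm_le T L).
  { intro h. eapply Rle_trans; [apply HC|].
    apply Rmult_le_compat_r; [apply hnorm_ge_0 | apply Rmax_l]. }
  destruct (HG 1 Rlt_0_1) as [d [Hd HGd]].
  set (eta := Rmin d (eps / (L + 2))).
  assert (Heta : 0 < eta) by (apply Rmin_pos; [|apply Rdiv_lt_0_compat]; lra).
  assert (eta <= d) by apply Rmin_l. assert (eta <= eps / (L + 2)) by apply Rmin_r.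
  destruct (Hx eta Heta) as [N HN]. exists N. intros n Hn Pn.
  specialize (HN n Hn Pn).
  specialize (HGd (x n -v u) ltac:(lra)).
  replace (u +v (x n -v u)) with (x n) in HGd by hilbert_ring.
  replace (G (x n) -v G u) with ((G (x n) -v G u -v T (x n -v u)) +v T (x n -v u))
    by hilbert_ring.
  eapply Rle_lt_trans; [apply hnorm_triang|].
  pose proof (HT (x n -v u)). pose proof (hnorm_ge_0 (x n -v u)).
  assert (eps / (L + 2) * (L + 2) = eps) by (field; lra).
  nra.
Qed.

Lemma hconverges_on_adjoint {X Y : Hilbert} P (G : X -> Y) DG DGs c rho L u
    (x : nat -> X) (r : nat -> Y) r0 :
  C1_on_ball G DG c rho -> (forall v, in_ball c rho v -> is_adjoint (DG v) (DGs v)) ->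
  (forall v, in_ball c rho v -> opnorm_le (DG v) L) -> 0 <= L ->
  in_ball c rho u -> (forall n, P n -> in_ball c rho (x n)) ->
  hconverges_on P x u -> hconverges_on P r r0 ->
  hconverges_on P (fun n => DGs (x n) (r n)) (DGs u r0).
Proof.
  intros [_ HDG] Hadj HL L_ge0 Hu Hxb Hx Hr eps Heps.
  pose proof (hnorm_ge_0 r0).
  set (eta := eps / (2 * (hnorm r0 + 1))).
  assert (Heta : 0 < eta) by (apply Rdiv_lt_0_compat; lra).
  destruct (HDG u Hu eta Heta) as [d [Hd HDGd]].
  destruct (Hx d Hd) as [N1 H1].
  destruct (Hr (eps / (2 * (L + 1)))) as [N2 H2]; [apply Rdiv_lt_0_compat; lra|].
  exists (max N1 N2). intros n Hn Pn.
  specialize (H1 n ltac:(lia) Pn). specialize (H2 n ltac:(lia) Pn).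
  pose proof (hnorm_ge_0 (r n -v r0)).
  assert (Hsplit : hnorm (DGs (x n) (r n) -v DGs u r0) <= L * hnorm (r n -v r0) + eta * hnorm r0).
  { apply hnorm_le_of_inner_le; [nra|]. intro h.
    rewrite hinner_sub_r, <- (Hadj _ (Hxb n Pn)), <- (Hadj _ Hu).
    replace (hinner (DG (x n) h) (r n) - hinner (DG u h) r0) with
      (hinner (DG (x n) h) (r n -v r0) + hinner (DG (x n) h -v DG u h) r0)
      by (rewrite hinner_sub_r, hinner_sub_l; ring).
    pose proof (Cauchy_Schwarz_le (DG (x n) h) (r n -v r0)).
    pose proof (Cauchy_Schwarz_le (DG (x n) h -v DG u h) r0).
    pose proof (HL _ (Hxb n Pn) h). pose proof (HDGd _ (Hxb n Pn) H1 h).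
    pose proof (hnorm_ge_0 h). pose proof (hnorm_ge_0 (DG (x n) h)).
    assert (hnorm (DG (x n) h) * hnorm (r n -v r0) <= L * hnorm h * hnorm (r n -v r0)) by nra.
    assert (hnorm (DG (x n) h -v DG u h) * hnorm r0 <= eta * hnorm h * hnorm r0) by nra.
    nra. }
  eapply Rle_lt_trans; [exact Hsplit|].
  assert (eta * hnorm r0 < eps / 2).
  { unfold eta. unfold Rdiv. rewrite Rinv_mult.
    assert (hnorm r0 * / (hnorm r0 + 1) < 1).
    { apply (Rmult_lt_reg_r (hnorm r0 + 1)); [lra|]. rewrite Rmult_assoc, Rinv_l; lra. }
    replace (eps * (/ 2 * / (hnorm r0 + 1)) * hnorm r0)
      with ((eps * / 2) * (hnorm r0 * / (hnorm r0 + 1))) by ring.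
    nra. }
  assert (L * hnorm (r n -v r0) <= eps / 2).
  { assert (eps / (2 * (L + 1)) * (L + 1) = eps / 2) by (field; lra). nra. }
  lra.
Qed.

Lemma in_ball_of_hconverges {H : Hilbert} (s : nat -> H) l c rho :
  hconverges s l -> (forall k, in_ball c rho (s k)) -> in_ball c rho l.
Proof.
  intros Hs Hball. apply Rle_plus_epsilon. intros eps Heps.
  destruct (Hs eps Heps) as [N HN]. specialize (HN N (le_n N)).
  rewrite hnorm_sub_sym in HN. pose proof (hnorm_dist_triang l (s N) c).
  pose proof (Hball N). unfold in_ball in *. lra.
Qed.

Lemma hconverges_stationary {H : Hilbert} (s : nat -> H) l j :
  hconverges s l -> (forall m, s (m + j)%nat = s j) -> s j = l.
Proof.
  intros Hs Hstat. apply hnorm_sub_eq0, Rle_antisym; [|apply hnorm_ge_0].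
  apply Rle_plus_epsilon. intros eps Heps.
  destruct (Hs eps Heps) as [N HN]. specialize (HN (N + j)%nat ltac:(lia)).
  rewrite Hstat in HN. lra.
Qed.

Lemma nonincreasing_below (f : nat -> R) K rho :
  (forall k, (k < K)%nat -> f k <= rho -> f (S k) <= f k) ->
  forall k m, (k <= m <= K)%nat -> f k <= rho -> f m <= f k.
Proof.
  intros Hstep k m. induction m as [|m IH]; intros Hkm Hk.
  - replace k with 0%nat by lia. lra.
  - destruct (Nat.eq_dec k (S m)) as [->|Hne]; [lra|].
    assert (f m <= f k) by (apply IH; [lia | exact Hk]).
    pose proof (Hstep m ltac:(lia) ltac:(lra)). lra.
Qed.

Lemma eventually_forall_le (Q : nat -> nat -> Prop) :
  (forall j, exists N, forall n, (N <= n)%nat -> Q j n) ->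
  forall K, exists N, forall n, (N <= n)%nat -> forall j, (j <= K)%nat -> Q j n.
Proof.
  intros HQ K. induction K as [|K [N1 H1]].
  - destruct (HQ 0%nat) as [N HN]. exists N. intros n Hn j Hj.
    replace j with 0%nat by lia. auto.
  - destruct (HQ (S K)) as [N2 H2]. exists (max N1 N2).
    intros n Hn j Hj. destruct (Nat.eq_dec j (S K)) as [->|]; [apply H2 | apply H1]; lia.
Qed.

Lemma discrepancy_index_eventually_ne {Y : Hilbert} (res : nat -> Y) (r0 : Y)
    (delta : nat -> R) tau (kn : nat -> nat) j :
  0 < tau -> r0 <> hzero -> hconverges_on (fun n => (j <= kn n)%nat) res r0 ->
  (forall eps, 0 < eps -> exists N, forall n, (N <= n)%nat -> Rabs (delta n) < eps) ->
  (forall n, kn n = j -> hnorm (res n) <= tau * delta n) ->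
  exists N, forall n, (N <= n)%nat -> kn n <> j.
Proof.
  intros Htau Hr0 Hres Hdelta Hstop.
  assert (Hr0pos : 0 < hnorm r0).
  { destruct (Rle_lt_or_eq_dec 0 (hnorm r0) (hnorm_ge_0 r0)) as [|E]; [assumption|].
    exfalso. apply Hr0, hnorm_eq0. symmetry. exact E. }
  destruct (Hres (hnorm r0 / 2)) as [N1 H1]; [lra|].
  destruct (Hdelta (hnorm r0 / (2 * tau))) as [N2 H2]; [apply Rdiv_lt_0_compat; lra|].
  exists (max N1 N2). intros n Hn E.
  specialize (H1 n ltac:(lia) ltac:(lia)). specialize (H2 n ltac:(lia)).
  pose proof (Hstop n E). pose proof (Rle_abs (delta n)).
  assert (tau * delta n < hnorm r0 / 2).
  { replace (hnorm r0 / 2) with (tau * (hnorm r0 / (2 * tau))) by (field; lra).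
    apply Rmult_lt_compat_l; lra. }
  pose proof (hnorm_dist_triang r0 (res n) hzero).
  rewrite hnorm_sub_sym in H1.
  replace (r0 -v hzero) with r0 in * by hilbert_ring.
  replace (res n -v hzero) with (res n) in * by hilbert_ring.
  lra.
Qed.

Lemma stopped_sequence_converges {H : Hilbert} (u : nat -> H) ubar (U : nat -> nat -> H)
    (kn : nat -> nat) rho :
  0 < rho -> hconverges u ubar ->
  (forall k, hconverges_on (fun n => (k <= kn n)%nat) (fun n => U n k) (u k)) ->
  (forall j, u j <> ubar -> exists N, forall n, (N <= n)%nat -> kn n <> j) ->
  (forall n k m, (k <= m <= kn n)%nat -> hnorm (U n k -v ubar) <= rho ->
     hnorm (U n m -v ubar) <= hnorm (U n k -v ubar)) ->
  hconverges (fun n => U n (kn n)) ubar.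
Proof.
  intros Hrho Hu HU Hearly Hmono eps Heps.
  set (e := Rmin eps rho).
  assert (0 < e) by (apply Rmin_pos; lra).
  assert (e <= eps) by apply Rmin_l. assert (e <= rho) by apply Rmin_r.
  destruct (Hu (e / 2)) as [K HK]; [lra|].
  destruct (eventually_forall_le
              (fun j n => (j <= kn n)%nat -> hnorm (U n j -v u j) < e / 2)
              (fun j => HU j (e / 2) ltac:(lra)) K) as [NA HA].
  destruct (eventually_forall_le (fun j n => kn n = j -> u j = ubar)) with (K := K)
    as [NB HB].
  { intro j. destruct (classic (u j = ubar)) as [E|E].
    - exists 0%nat. auto.
    - destruct (Hearly j E) as [N HN]. exists N. intros n Hn Ej. exfalso. exact (HN n Hn Ej). }
  exists (max NA NB). intros n Hn. cbv beta.
  destruct (Compare_dec.le_lt_dec K (kn n)) as [HKn|HKn].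
  - specialize (HA n ltac:(lia) K (le_n K) HKn). specialize (HK K (le_n K)).
    pose proof (hnorm_dist_triang (U n K) (u K) ubar).
    pose proof (Hmono n K (kn n) ltac:(lia) ltac:(lra)). lra.
  - specialize (HB n ltac:(lia) (kn n) ltac:(lia) eq_refl).
    specialize (HA n ltac:(lia) (kn n) ltac:(lia) (le_n _)).
    rewrite HB in HA. lra.
Qed.

Section Iteration.

Variables (X Y : Hilbert) (F Ah : X -> Y) (DF DA : X -> X -> Y) (DFs DAs : X -> Y -> X)
  (phi : nat -> X -> Y -> R) (y : Y) (udag u0 : X) (rho nu LF LA : R).

Hypotheses (rho_gt0 : 0 < rho) (nu_gt0 : 0 < nu) (LF_ge0 : 0 <= LF) (LA_ge0 : 0 <= LA).
Hypotheses (F_udag : F udag = y) (u0_in_ball : in_ball udag rho u0).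
Hypothesis tangential_cone : forall u ut, in_ball udag rho u -> in_ball udag rho ut ->
  hnorm (F u -v F ut -v DF u (u -v ut)) <= nu * hnorm (F u -v F ut).
Hypotheses (F_C1 : C1_on_ball F DF udag rho) (Ah_C1 : C1_on_ball Ah DA udag rho).
Hypotheses (DF_adjoint : forall u, in_ball udag rho u -> is_adjoint (DF u) (DFs u))
  (DA_adjoint : forall u, in_ball udag rho u -> is_adjoint (DA u) (DAs u)).
Hypotheses (DF_bound : forall u, in_ball udag rho u -> opnorm_le (DF u) LF)
  (DA_bound : forall u, in_ball udag rho u -> opnorm_le (DA u) LA).
Hypothesis phi_ge0 : forall k x z, 0 <= phi k x z.

Local Notation ball := (in_ball udag rho).
Local Notation CA yv := (LA * rho + hnorm (Ah udag) + hnorm yv).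
Local Notation iter yv := (iterate F DFs Ah DAs phi yv u0).

Lemma Ah_residual_le v yv : ball v -> hnorm (Ah v -v yv) <= CA yv.
Proof.
  intros Hv.
  replace (Ah v -v yv) with ((Ah v -v Ah udag) +v Ah udag -v yv) by hilbert_ring.
  eapply Rle_trans; [apply hnorm_triang_sub|].
  pose proof (hnorm_triang (Ah v -v Ah udag) (Ah udag)).
  pose proof (mean_value_bound Ah DA udag rho LA v LA_ge0 (proj1 Ah_C1) DA_bound Hv).
  assert (LA * hnorm (v -v udag) <= LA * rho) by (apply Rmult_le_compat_l; assumption).
  lra.
Qed.

Lemma iterate_error_nonincreasing yv delta c Cl k w :
  let R := hnorm (F (iter yv k) -v yv) in
  ball (iter yv k) -> ball w -> F w = y -> hnorm (iter yv k -v w) <= rho ->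
  hnorm (yv -v y) <= delta -> (1 + nu) * delta * R <= c * R ^ 2 ->
  1 - LF ^ 2 - nu - c - 2 * LA * CA yv * Cl * rho > 0 ->
  phi k (iter yv k) yv * LA * CA yv <= rho -> phi k (iter yv k) yv <= Cl * R ^ 2 ->
  hnorm (iter yv (S k) -v w) <= hnorm (iter yv k -v w).
Proof.
  intros R Hu Hw HFw Huw Hyv Hnoise HC Hlam HlamR.
  set (u := iter yv k) in *. set (lam := phi k u yv) in *.
  change (iter yv (S k)) with (u -v DFs u (F u -v yv) -v lam *v DAs u (Ah u -v yv)).
  replace (u -v DFs u (F u -v yv) -v lam *v DAs u (Ah u -v yv) -v w)
    with ((u -v w) -v DFs u (F u -v yv) -v lam *v DAs u (Ah u -v yv)) by hilbert_ring.
  pose proof (hnorm_ge_0 (Ah udag)). pose proof (hnorm_ge_0 yv).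
  assert (HM : 0 <= LA * CA yv) by (apply Rmult_le_pos; nra).
  apply perturbed_descent_nonexpansive with (M := LA * CA yv) (rho := rho).
  - exact Huw.
  - apply phi_ge0.
  - eapply Rle_trans; [apply (adjoint_opnorm_le _ _ _ LA_ge0 (DA_adjoint u Hu) (DA_bound u Hu))|].
    apply Rmult_le_compat_l; [exact LA_ge0 | apply Ah_residual_le, Hu].
  - lra.
  - pose proof (tangential_cone_descent (DF u) (DFs u) (u -v w) (F u) (F w) yv nu LF delta
      LF_ge0 (Rlt_le _ _ nu_gt0) (DF_adjoint u Hu) (DF_bound u Hu) (tangential_cone u w Hu Hw)
      ltac:(now rewrite HFw)).
    pose proof (step_size_admissible lam (LA * CA yv) Cl rho R delta nu LF c
      (phi_ge0 _ _ _) HlamR HM (Rlt_le _ _ rho_gt0) Hnoise ltac:(lra)).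
    unfold R in *. lra.
Qed.

Lemma noisefree_iterate_in_ball C0lam :
  (forall k, phi k (iter y k) y * LA * CA y <= rho) ->
  (forall k, phi k (iter y k) y <= C0lam * hnorm (F (iter y k) -v y) ^ 2) ->
  1 - nu - LF ^ 2 - 2 * LA * CA y * C0lam * rho > 0 ->
  forall k, ball (iter y k).
Proof.
  intros Hlam HlamR HC k. induction k as [|k IH]; [exact u0_in_ball|].
  unfold in_ball. eapply Rle_trans; [|exact IH].
  apply (iterate_error_nonincreasing y 0 0 C0lam); auto.
  - apply in_ball_center. lra.
  - rewrite hsub_diag, hnorm_zero. lra.
  - lra.
  - lra.
Qed.

Lemma noisefree_iterate_stationary C0lam j :
  (forall k, phi k (iter y k) y <= C0lam * hnorm (F (iter y k) -v y) ^ 2) ->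
  ball (iter y j) -> F (iter y j) = y -> forall m, iter y (m + j) = iter y j.
Proof.
  intros HlamR Hball HFj m. induction m as [|m IH]; [reflexivity|].
  change (iter y (S m + j)) with
    (iter y (m + j) -v DFs (iter y (m + j)) (F (iter y (m + j)) -v y)
       -v phi (m + j)%nat (iter y (m + j)) y
          *v DAs (iter y (m + j)) (Ah (iter y (m + j)) -v y)).
  pose proof (HlamR (m + j)%nat). pose proof (phi_ge0 (m + j)%nat (iter y (m + j)) y).
  rewrite IH in *. rewrite HFj, hsub_diag, hnorm_zero in *.
  replace (phi (m + j)%nat (iter y j) y) with 0 by lra.
  rewrite (adjoint_zero _ _ (DF_adjoint _ Hball)). hilbert_ring.
Qed.

Section NoisyData.

Variables (yv : Y) (delta tau Cl : R) (K : nat).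
Hypotheses (tau_gt0 : 0 < tau) (yv_dist : hnorm (yv -v y) <= delta).
Hypothesis step_bounds : forall k, (k < K)%nat ->
  phi k (iter yv k) yv * LA * CA yv <= rho /\
  phi k (iter yv k) yv <= Cl * hnorm (F (iter yv k) -v yv) ^ 2.
Hypothesis Ctau_gt : (1 - LF ^ 2 - nu - (1 + nu) / tau) - 2 * LA * CA yv * Cl * rho > 0.
Hypothesis not_stopped : forall k, (k < K)%nat -> tau * delta < hnorm (F (iter yv k) -v yv).

Lemma noisy_iterate_error_nonincreasing k w :
  (k < K)%nat -> ball (iter yv k) -> ball w -> F w = y -> hnorm (iter yv k -v w) <= rho ->
  hnorm (iter yv (S k) -v w) <= hnorm (iter yv k -v w).
Proof.
  intros Hk Hu Hw HFw Huw. destruct (step_bounds k Hk).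
  apply (iterate_error_nonincreasing yv delta ((1 + nu) / tau) Cl); auto.
  apply noise_absorbed_by_discrepancy; auto; [lra | apply hnorm_ge_0].
Qed.

Lemma noisy_iterate_in_ball k : (k <= K)%nat -> ball (iter yv k).
Proof.
  intros Hk.
  assert (Hstep : forall j, (j < K)%nat -> hnorm (iter yv j -v udag) <= rho ->
            hnorm (iter yv (S j) -v udag) <= hnorm (iter yv j -v udag)).
  { intros j Hj Hjb. apply noisy_iterate_error_nonincreasing; auto.
    apply in_ball_center. lra. }
  pose proof (nonincreasing_below (fun j => hnorm (iter yv j -v udag)) K rho Hstep 0%nat k
    ltac:(lia) u0_in_ball).
  unfold in_ball in *. cbv beta in *. change (iter yv 0) with u0 in *. lra.
Qed.

Lemma noisy_iterate_error_monotone w k m :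
  ball w -> F w = y -> (k <= m <= K)%nat -> hnorm (iter yv k -v w) <= rho ->
  hnorm (iter yv m -v w) <= hnorm (iter yv k -v w).
Proof.
  intros Hw HFw. apply (nonincreasing_below (fun k => hnorm (iter yv k -v w)) K rho).
  intros j Hj Hjw. apply noisy_iterate_error_nonincreasing; auto.
  apply noisy_iterate_in_ball. lia.
Qed.

End NoisyData.

Lemma iterate_stable (yn : nat -> Y) (kn : nat -> nat) :
  hconverges yn y -> (forall k, ball (iter y k)) ->
  (forall n k, (k <= kn n)%nat -> ball (iter (yn n) k)) ->
  (forall k eps, 0 < eps -> exists d, 0 < d /\
     forall x z, hnorm (x -v iter y k) < d -> hnorm (z -v y) < d ->
       Rabs (phi k x z - phi k (iter y k) y) < eps) ->
  forall k, hconverges_on (fun n => (k <= kn n)%nat) (fun n => iter (yn n) k) (iter y k).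
Proof.
  intros Hyn Hu HU Hphi k. induction k as [|k IH].
  - intros eps Heps. exists 0%nat. intros n _ _. cbn. rewrite hsub_diag, hnorm_zero. exact Heps.
  - set (P := fun n => (S k <= kn n)%nat).
    assert (Hx : hconverges_on P (fun n => iter (yn n) k) (iter y k)).
    { apply (hconverges_on_weaken _ _ _ _ IH). unfold P. intros. lia. }
    assert (Hxb : forall n, P n -> ball (iter (yn n) k)) by (unfold P; intros; apply HU; lia).
    assert (Hy : hconverges_on P yn y) by (apply hconverges_on_of_hconverges, Hyn).
    assert (Hlam : Rconverges_on P (fun n => phi k (iter (yn n) k) (yn n)) (phi k (iter y k) y)).
    { intros eps Heps. destruct (Hphi k eps Heps) as [d [Hd Hphid]].
      destruct (Hx d Hd) as [N1 H1]. destruct (Hy d Hd) as [N2 H2].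
      exists (max N1 N2). intros n Hn Pn. apply Hphid; [apply H1 | apply H2]; auto; lia. }
    assert (HF := hconverges_on_adjoint P F DF DFs udag rho LF _ _ _ _ F_C1 DF_adjoint DF_bound
      LF_ge0 (Hu k) Hxb Hx
      (hconverges_on_sub _ _ _ _ _ (frechet_hconverges_on _ _ _ _ _ (proj1 F_C1 _ (Hu k)) Hx) Hy)).
    assert (HA := hconverges_on_adjoint P Ah DA DAs udag rho LA _ _ _ _ Ah_C1 DA_adjoint DA_bound
      LA_ge0 (Hu k) Hxb Hx
      (hconverges_on_sub _ _ _ _ _ (frechet_hconverges_on _ _ _ _ _ (proj1 Ah_C1 _ (Hu k)) Hx) Hy)).
    exact (hconverges_on_sub _ _ _ _ _ (hconverges_on_sub _ _ _ _ _ Hx HF)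
             (hconverges_on_scal _ _ _ _ _ Hlam HA)).
Qed.

Theorem discrepancy_principle_convergence C0lam ubar (delta : nat -> R) (yn : nat -> Y)
    (kn : nat -> nat) tau Clam :
  (forall k, phi k (iter y k) y * LA * CA y <= rho) ->
  (forall k, phi k (iter y k) y <= C0lam * hnorm (F (iter y k) -v y) ^ 2) ->
  1 - nu - LF ^ 2 - 2 * LA * CA y * C0lam * rho > 0 ->
  (forall k eps, 0 < eps -> exists d, 0 < d /\
     forall x z, hnorm (x -v iter y k) < d -> hnorm (z -v y) < d ->
       Rabs (phi k x z - phi k (iter y k) y) < eps) ->
  hconverges (iter y) ubar -> F ubar = y ->
  (forall eps, 0 < eps -> exists N, forall n, (N <= n)%nat -> Rabs (delta n) < eps) ->
  (forall n, hnorm (yn n -v y) <= delta n) -> 0 < tau ->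
  (forall n,
     (forall k, (k < kn n)%nat ->
        phi k (iter (yn n) k) (yn n) * LA * CA (yn n) <= rho /\
        phi k (iter (yn n) k) (yn n) <= Clam * hnorm (F (iter (yn n) k) -v yn n) ^ 2) /\
     (1 - LF ^ 2 - nu - (1 + nu) / tau) - 2 * LA * CA (yn n) * Clam * rho > 0) ->
  (forall n,
     hnorm (F (iter (yn n) (kn n)) -v yn n) <= tau * delta n /\
     (forall k, (k < kn n)%nat -> tau * delta n < hnorm (F (iter (yn n) k) -v yn n))) ->
  hconverges (fun n => iter (yn n) (kn n)) ubar.
Proof.
  intros Hlam0 HlamR0 HC0 Hphi Hconv HFubar Hdelta Hyn Htau Hnoisy Hstop.
  pose proof (noisefree_iterate_in_ball C0lam Hlam0 HlamR0 HC0) as Hu.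
  pose proof (in_ball_of_hconverges _ _ _ _ Hconv Hu) as Hubar.
  pose proof (hconverges_of_dist_le _ _ _ Hyn Hdelta) as Hyn_conv.
  assert (HU : forall n k, (k <= kn n)%nat -> ball (iter (yn n) k)).
  { intros n. destruct (Hnoisy n).
    apply (noisy_iterate_in_ball (yn n) (delta n) tau Clam (kn n)); auto. apply Hstop. }
  pose proof (iterate_stable yn kn Hyn_conv Hu HU Hphi) as Hstable.
  apply (stopped_sequence_converges (iter y) ubar (fun n => iter (yn n)) kn rho); auto.
  - intros j Hj.
    assert (HFj : F (iter y j) -v y <> hzero).
    { intros E. apply Hj, (hconverges_stationary _ _ _ Hconv).
      apply (noisefree_iterate_stationary C0lam); auto. apply hsub_eq0, E. }
    apply (discrepancy_index_eventually_ne (fun n => F (iter (yn n) j) -v yn n)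
             (F (iter y j) -v y) delta tau kn j Htau HFj).
    + apply hconverges_on_sub; [|apply hconverges_on_of_hconverges, Hyn_conv].
      apply (frechet_hconverges_on _ _ (DF (iter y j))); [apply F_C1, Hu | apply Hstable].
    + exact Hdelta.
    + intros n <-. apply Hstop.
  - intros n k m Hkm Hk. destruct (Hnoisy n).
    apply (noisy_iterate_error_monotone (yn n) (delta n) tau Clam (kn n)); auto. apply Hstop.
Qed.

End Iteration.

Theorem mainTheorem5
  (X Y : Hilbert)
  (F Ah : X -> Y)
  (DF DA : X -> X -> Y)
  (DFs DAs : X -> Y -> X)
  (y : Y) (udag u0 : X) (rho nu LF LA C0lam : R)
  (phi : nat -> X -> Y -> R)
  (ubar : X)
  (delta : nat -> R) (yn : nat -> Y) (kn : nat -> nat)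
  (tau Clam : R) :
  F udag = y ->
  0 < rho ->
  (forall u, in_ball udag rho u -> in_ball u0 (2 * rho) u) ->
  in_ball udag rho u0 ->
  0 < nu ->
  (forall u ut, in_ball udag rho u -> in_ball udag rho ut ->
     hnorm (F u -v F ut -v DF u (u -v ut)) <= nu * hnorm (F u -v F ut)) ->
  C1_on_ball F DF udag rho ->
  C1_on_ball Ah DA udag rho ->
  (forall u, in_ball udag rho u -> is_adjoint (DF u) (DFs u)) ->
  (forall u, in_ball udag rho u -> is_adjoint (DA u) (DAs u)) ->
  (forall u, in_ball udag rho u -> opnorm_le (DF u) LF) ->
  (forall u, in_ball udag rho u -> opnorm_le (DA u) LA) ->
  (exists CN, 0 < CN /\ CN <= hnorm (Ah udag -v y)) ->
  (forall k x z, 0 <= phi k x z) ->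
  (let uk := iterate F DFs Ah DAs phi y u0 in
   let C0A := LA * rho + hnorm (Ah udag) + hnorm y in
   (forall k, phi k (uk k) y * LA * C0A <= rho) /\
   (forall k, phi k (uk k) y <= C0lam * (hnorm (F (uk k) -v y)) ^ 2) /\
   1 - nu - LF ^ 2 - 2 * LA * C0A * C0lam * rho > 0) ->
  (forall k eps, 0 < eps -> exists d, 0 < d /\
     forall x z, hnorm (x -v iterate F DFs Ah DAs phi y u0 k) < d -> hnorm (z -v y) < d ->
       Rabs (phi k x z - phi k (iterate F DFs Ah DAs phi y u0 k) y) < eps) ->
  hconverges (iterate F DFs Ah DAs phi y u0) ubar ->
  F ubar = y ->
  (forall eps, 0 < eps -> exists N, forall n, (N <= n)%nat -> Rabs (delta n) < eps) ->
  (forall n, hnorm (yn n -v y) <= delta n) ->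
  0 < tau ->
  0 <= 1 - LF ^ 2 - nu - (1 + nu) / tau ->
  0 < Clam ->
  (forall n,
     let un := iterate F DFs Ah DAs phi (yn n) u0 in
     let CnA := LA * rho + hnorm (Ah udag) + hnorm (yn n) in
     (forall k, (k < kn n)%nat ->
        phi k (un k) (yn n) * LA * CnA <= rho /\
        phi k (un k) (yn n) <= Clam * (hnorm (F (un k) -v yn n)) ^ 2) /\
     (1 - LF ^ 2 - nu - (1 + nu) / tau) - 2 * LA * CnA * Clam * rho > 0) ->
  (forall n,
     let un := iterate F DFs Ah DAs phi (yn n) u0 in
     hnorm (F (un (kn n)) -v yn n) <= tau * delta n /\
     (forall k, (k < kn n)%nat -> tau * delta n < hnorm (F (un k) -v yn n))) ->
  hconverges (fun n => iterate F DFs Ah DAs phi (yn n) u0 (kn n)) ubar.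
Proof.
  intros HFudag Hrho _ Hu0 Hnu Hcone HC1F HC1A HadjF HadjA HLF HLA _ Hphi0 Hnoisefree
    Hphi Hconv HFubar Hdelta Hyn Htau _ _ Hnoisy Hstop.
  assert (Hudag : in_ball udag rho udag) by (apply in_ball_center; lra).
  destruct (Rlt_or_le LA 0) as [LA_neg | LA_ge0].
  { exact (hconverges_of_opnorm_neg _ _ _ _ LA_neg (HLA udag Hudag)). }
  destruct (Rlt_or_le LF 0) as [LF_neg | LF_ge0].
  { exact (hconverges_of_opnorm_neg _ _ _ _ LF_neg (HLF udag Hudag)). }
  cbv zeta in Hnoisefree, Hnoisy, Hstop.
  destruct Hnoisefree as (Hlam0 & HlamR0 & HC0).
  exact (discrepancy_principle_convergence X Y F Ah DF DA DFs DAs phi y udag u0 rho nu LF LA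
    Hrho Hnu LF_ge0 LA_ge0 HFudag Hu0 Hcone HC1F HC1A HadjF HadjA HLF HLA Hphi0
    C0lam ubar delta yn kn tau Clam Hlam0 HlamR0 HC0 Hphi Hconv HFubar Hdelta Hyn Htau
    Hnoisy Hstop).
Qed.
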